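(* Let $\tilde{\boldsymbol\Gamma}^\omega$ denote the fundamental solution $\boldsymbol\Gamma^\omega$ with the parameters $(\lambda,\mu,\rho)$ replaced by $(\tilde\lambda,\tilde\mu,\tilde\rho)=(\lambda/\delta,\mu/\delta,\rho/\epsilon)$, and let $\tau=\sqrt{\delta/\epsilon}$. Then as $\omega\to0^+$, $$\tilde{\boldsymbol\Gamma}^\omega(\mathbf{x})=\delta\boldsymbol\Gamma(\mathbf{x})+\delta\gamma_{\tau\omega}\mathbf{I}_2+\delta\omega^2\ln\omega\,\rho\tau^2\boldsymbol\Gamma_1(\mathbf{x})+\delta\omega^2\rho\tau^2\ln(\sqrt\rho\tau)\boldsymbol\Gamma_1(\mathbf{x})+\delta\omega^2\rho\tau^2\boldsymbol\Gamma_2(\mathbf{x})+\mathcal{O}(\delta\tau^4\omega^4\ln\omega+\delta\tau^4\omega^4),$$ where $\gamma_{\tau\omega}=\alpha_1\ln(\sqrt\rho\tau\omega)+\alpha$.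
   Context: Lamé constants $\lambda,\mu$, density $\rho>0$, $\delta,\epsilon>0$. For parameters $(\lambda,\mu,\rho)$, $c_s=\sqrt{\mu/\rho}$, $c_p=\sqrt{(\lambda+2\mu)/\rho}$, $k_s=\omega/c_s$, $k_p=\omega/c_p$, and $\boldsymbol\Gamma^\omega(\mathbf{x})=-\frac{\mathrm{i}}{4\mu}H_0^{(1)}(k_s|\mathbf{x}|)\mathbf{I}_2+\frac{\mathrm{i}}{4\omega^2\rho}\nabla\nabla\big(H_0^{(1)}(k_p|\mathbf{x}|)-H_0^{(1)}(k_s|\mathbf{x}|)\big)$. $\boldsymbol\Gamma(\mathbf{x})=\alpha_1\ln|\mathbf{x}|\mathbf{I}_2-\alpha_2\frac{\mathbf{x}\mathbf{x}^T}{|\mathbf{x}|^2}$, $\alpha_1=\frac1{4\pi}(\frac1\mu+\frac1{2\mu+\lambda})$, $\alpha_2=\frac1{4\pi}(\frac1\mu-\frac1{2\mu+\lambda})$; $E_c=2\gamma-\mathrm{i}\pi-2\ln2$; $\alpha=\frac{\alpha_1}2E_c+\frac{\alpha_2}2-\frac1{8\pi}(\frac1\mu\ln\mu+\frac1{2\mu+\lambda}\ln(2\mu+\lambda))$. $\boldsymbol\Gamma_1(\mathbf{x})=\beta_2|\mathbf{x}|^2\mathbf{I}_2+\beta_3\mathbf{x}\mathbf{x}^T$, $\boldsymbol\Gamma_2(\mathbf{x})=\beta_1|\mathbf{x}|^2\mathbf{I}_2+\beta_2\ln|\mathbf{x}||\mathbf{x}|^2\mathbf{I}_2+\beta_3\ln|\mathbf{x}|\mathbf{x}\mathbf{x}^T+\beta_4\mathbf{x}\mathbf{x}^T$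 with $\beta_2=-\frac1{2^5\pi}(\frac3{\mu^2}+\frac1{(2\mu+\lambda)^2})$, $\beta_3=\frac1{2^4\pi}(\frac1{\mu^2}-\frac1{(2\mu+\lambda)^2})$, $\beta_1=(\frac12E_c-1)\beta_2-\frac18\beta_3+\frac1{2^6\pi}(\frac3{\mu^2}\ln\mu+\frac{\ln(2\mu+\lambda)}{(2\mu+\lambda)^2})$, $\beta_4=\frac14(2E_c-3)\beta_3-\frac1{2^5\pi}(\frac{\ln\mu}{\mu^2}-\frac{\ln(2\mu+\lambda)}{(2\mu+\lambda)^2})$ (all with the unscaled $\lambda,\mu$). *)

From Stdlib Require Import Reals Lra Arith.
From Coquelicot Require Import Coquelicot.
Open Scope R_scope.

Fixpoint harm (n : nat) : R :=
  match n with O => 0 | S m => harm m + / INR (S m) end.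

Definition euler_gamma : R := real (Lim_seq (fun n => harm n - ln (INR n))).

Definition besselJ0 (t : R) : R :=
  Series (fun k => (-1) ^ k * (t / 2) ^ (2 * k) / (INR (Factorial.fact k)) ^ 2).

Definition besselY0 (t : R) : R :=
  2 / PI * ((ln (t / 2) + euler_gamma) * besselJ0 t
            + Series (fun k => (-1) ^ (S k) * harm k * (t / 2) ^ (2 * k)
                               / (INR (Factorial.fact k)) ^ 2)).

Definition hankel10 (t : R) : C := (besselJ0 t, besselY0 t).

(** Points of R^2, coordinates indexed by bool (false = 1st, true = 2nd). *)
Definition coord (x : R * R) (i : bool) : R := if i then snd x else fst x.
Definition setc (x : R * R) (i : bool) (t : R) : R * R :=
  if i then (fst x, t) else (t, snd x).
Definition norm2 (x : R * R) : R := sqrt (fst x ^ 2 + snd x ^ 2).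
Definition kron (i j : bool) : R := if Bool.eqb i j then 1 else 0.

Definition partial (i : bool) (f : R * R -> R) (x : R * R) : R :=
  Derive (fun t => f (setc x i t)) (coord x i).

Definition hessC (i j : bool) (g : R * R -> C) (x : R * R) : C :=
  (partial i (partial j (fun y => fst (g y))) x,
   partial i (partial j (fun y => snd (g y))) x).

Definition Gamma_omega (lam mu rho w : R) (x : R * R) (i j : bool) : C :=
  let cs := sqrt (mu / rho) in
  let cp := sqrt ((lam + 2 * mu) / rho) in
  let ks := w / cs in
  let kp := w / cp in
  (- (Ci / RtoC (4 * mu)) * hankel10 (ks * norm2 x) * RtoC (kron i j)
   + (Ci / RtoC (4 * w ^ 2 * rho))
     * hessC i j (fun y => hankel10 (kp * norm2 y) - hankel10 (ks * norm2 y)) x)%C.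

Definition alpha1 (lam mu : R) : R := / (4 * PI) * (/ mu + / (2 * mu + lam)).
Definition alpha2 (lam mu : R) : R := / (4 * PI) * (/ mu - / (2 * mu + lam)).
Definition Ec : C := (2 * euler_gamma - 2 * ln 2, - PI).
Definition alpha_c (lam mu : R) : C :=
  (RtoC (alpha1 lam mu / 2) * Ec + RtoC (alpha2 lam mu / 2)
   - RtoC (/ (8 * PI) * (/ mu * ln mu + / (2 * mu + lam) * ln (2 * mu + lam))))%C.

Definition beta2 (lam mu : R) : R :=
  - / (2 ^ 5 * PI) * (3 / mu ^ 2 + / (2 * mu + lam) ^ 2).
Definition beta3 (lam mu : R) : R :=
  / (2 ^ 4 * PI) * (/ mu ^ 2 - / (2 * mu + lam) ^ 2).
Definition beta1 (lam mu : R) : C :=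
  ((RtoC (/ 2) * Ec - 1) * RtoC (beta2 lam mu) - RtoC (/ 8 * beta3 lam mu)
   + RtoC (/ (2 ^ 6 * PI) * (3 / mu ^ 2 * ln mu + ln (2 * mu + lam) / (2 * mu + lam) ^ 2)))%C.
Definition beta4 (lam mu : R) : C :=
  (RtoC (/ 4) * (2 * Ec - 3) * RtoC (beta3 lam mu)
   - RtoC (/ (2 ^ 5 * PI) * (ln mu / mu ^ 2 - ln (2 * mu + lam) / (2 * mu + lam) ^ 2)))%C.

Definition Gamma0 (lam mu : R) (x : R * R) (i j : bool) : R :=
  alpha1 lam mu * ln (norm2 x) * kron i j
  - alpha2 lam mu * (coord x i * coord x j) / (norm2 x) ^ 2.
Definition Gamma1 (lam mu : R) (x : R * R) (i j : bool) : R :=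
  beta2 lam mu * (norm2 x) ^ 2 * kron i j + beta3 lam mu * (coord x i * coord x j).
Definition Gamma2 (lam mu : R) (x : R * R) (i j : bool) : C :=
  (beta1 lam mu * RtoC ((norm2 x) ^ 2 * kron i j)
   + RtoC (beta2 lam mu * ln (norm2 x) * (norm2 x) ^ 2 * kron i j
           + beta3 lam mu * ln (norm2 x) * (coord x i * coord x j))
   + beta4 lam mu * RtoC (coord x i * coord x j))%C.

Definition gamma_tw (lam mu rho tau w : R) : C :=
  (RtoC (alpha1 lam mu * ln (sqrt rho * tau * w)) + alpha_c lam mu)%C.

Definition expansion (lam mu rho delta tau w : R) (x : R * R) (i j : bool) : C :=
  (RtoC (delta * Gamma0 lam mu x i j)
   + RtoC delta * gamma_tw lam mu rho tau w * RtoC (kron i j)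
   + RtoC (delta * w ^ 2 * ln w * rho * tau ^ 2 * Gamma1 lam mu x i j)
   + RtoC (delta * w ^ 2 * rho * tau ^ 2 * ln (sqrt rho * tau) * Gamma1 lam mu x i j)
   + RtoC (delta * w ^ 2 * rho * tau ^ 2) * Gamma2 lam mu x i j)%C.

From Stdlib Require Import Reals Lra Lia Factorial.
From Coquelicot Require Import Coquelicot.
Open Scope R_scope.

(* With s = (t/2)^2 one has J_0(t) = J(s) and Y_0(t) = (2/pi) ((ln s / 2 + gamma) J(s) + S(s))
   for power series J, S whose coefficients, like those of their derivatives, are bounded by
   1/n!.  So on 0 < s <= 1/2, J_0, Y_0 and their first two s-derivatives are explicit
   polynomials in s, 1/s and ln s plus s^k times a remainder bounded by C (1 + |ln s|).
   Gamma^omega combines these functions at s = (k|x|/2)^2 with the Hessian of the radial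
   function H_0(k_p|x|) - H_0(k_s|x|), which is 4 G''(|x|^2) x x^T + 2 G'(|x|^2) I.
   Substituting the expansions, every term of order below omega^4 cancels exactly against the
   stated expansion (a field identity), leaving omega^4 times a fixed linear combination of
   remainders evaluated at s = c omega^2 |x|^2, i.e. O(omega^4 (1 + |ln omega|)); and
   1 + |ln omega| <= 3 |ln omega + 1| once omega <= exp(-2). *)

(* A bound 1/n!, unlike a constant bound, survives [PS_derive]. *)
Definition fact_bounded (a : nat -> R) : Prop :=
  forall n, Rabs (a n) <= / INR (fact n).

Lemma fact_bounded_PS_derive a : fact_bounded a -> fact_bounded (PS_derive a).
Proof.
  intros Ha n. unfold PS_derive.
  rewrite Rabs_mult, (Rabs_pos_eq (INR (S n))) by apply pos_INR.
  assert (HS : 0 < INR (S n)) by (apply lt_0_INR; lia).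
  pose proof (INR_fact_lt_0 n).
  apply Rle_trans with (INR (S n) * / INR (fact (S n))).
  - apply Rmult_le_compat_l; [lra | apply Ha].
  - rewrite fact_simpl, mult_INR. right. field. lra.
Qed.

Lemma fact_bounded_PS_decr_n a k : fact_bounded a -> fact_bounded (PS_decr_n a k).
Proof.
  intros Ha n. unfold PS_decr_n. eapply Rle_trans; [apply Ha|].
  apply Rinv_le_contravar; [apply INR_fact_lt_0|]. apply le_INR, fact_le. lia.
Qed.

Lemma fact_bounded_le_1 a n : fact_bounded a -> Rabs (a n) <= 1.
Proof.
  intros Ha. eapply Rle_trans; [apply Ha|]. rewrite <- Rinv_1.
  apply Rinv_le_contravar; [lra|]. apply (le_INR 1). pose proof (lt_O_fact n). lia.
Qed.

Lemma fact_bounded_CV_radius a : fact_bounded a -> Rbar_le 1 (CV_radius a).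
Proof.
  intros Ha. apply (proj1 (CV_radius_bounded a)). exists 1. intros n.
  rewrite pow1, Rmult_1_r. now apply fact_bounded_le_1.
Qed.

Lemma fact_bounded_in_disk a s :
  fact_bounded a -> Rabs s <= / 2 -> Rbar_lt (Rabs s) (CV_radius a).
Proof.
  intros Ha Hs. generalize (fact_bounded_CV_radius a Ha).
  destruct (CV_radius a); simpl; intros; lra.
Qed.

Lemma fact_bounded_is_derive a s :
  fact_bounded a -> Rabs s <= / 2 -> is_derive (PSeries a) s (PSeries (PS_derive a) s).
Proof. intros; now apply is_derive_PSeries, fact_bounded_in_disk. Qed.

Lemma fact_bounded_PSeries_le a s :
  fact_bounded a -> Rabs s <= / 2 -> Rabs (PSeries a s) <= 2.
Proof.
  intros Ha Hs. unfold PSeries.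
  assert (Hgeom : is_series (fun n => (/ 2) ^ n) 2).
  { pose proof (is_series_geom (/ 2)) as Hg.
    replace (/ (1 - / 2)) with 2 in Hg by field.
    apply Hg. rewrite Rabs_pos_eq; lra. }
  assert (Hle : forall n, Rabs (a n * s ^ n) <= (/ 2) ^ n).
  { intros n. rewrite Rabs_mult, <- RPow_abs, <- (Rmult_1_l ((/ 2) ^ n)).
    apply Rmult_le_compat; try apply Rabs_pos; try apply pow_le, Rabs_pos.
    - now apply fact_bounded_le_1.
    - apply pow_incr. split; [apply Rabs_pos | exact Hs]. }
  assert (Hex : ex_series (fun n => Rabs (a n * s ^ n))).
  { apply (@ex_series_le R_AbsRing R_CompleteNormedModule _ (fun n => (/ 2) ^ n)).
    - intros n. unfold norm; simpl. rewrite Rabs_Rabsolu. apply Hle.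
    - eexists; exact Hgeom. }
  eapply Rle_trans; [now apply Series_Rabs|].
  rewrite <- (is_series_unique _ _ Hgeom). apply Series_le; [|eexists; exact Hgeom].
  intros n; split; [apply Rabs_pos | apply Hle].
Qed.

Definition J0_coef (n : nat) : R := (-1) ^ n / INR (fact n) ^ 2.
Definition S0_coef (n : nat) : R := (-1) ^ S n * harm n / INR (fact n) ^ 2.

Lemma harm_le n : 0 <= harm n <= INR n.
Proof.
  induction n as [|n IH]; [simpl; lra|].
  change (harm (S n)) with (harm n + / INR (S n)).
  rewrite S_INR. pose proof (pos_INR n).
  assert (0 < / (INR n + 1) <= 1).
  { split; [apply Rinv_0_lt_compat; lra|].
    rewrite <- Rinv_1. apply Rinv_le_contravar; lra. }
  lra.
Qed.

Lemma INR_le_fact n : INR n <= INR (fact n).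
Proof.
  apply le_INR. destruct n as [|n]; [simpl; lia|].
  rewrite fact_simpl. pose proof (lt_O_fact n). nia.
Qed.

Lemma fact_bounded_J0_coef : fact_bounded J0_coef.
Proof.
  intros n. unfold J0_coef, Rdiv. pose proof (INR_fact_lt_0 n).
  rewrite Rabs_mult, pow_1_abs, Rmult_1_l, Rabs_pos_eq.
  2:{ apply Rlt_le, Rinv_0_lt_compat, pow_lt. lra. }
  apply Rinv_le_contravar; [lra|].
  assert (1 <= INR (fact n)) by (apply (le_INR 1); pose proof (lt_O_fact n); lia). nra.
Qed.

Lemma fact_bounded_S0_coef : fact_bounded S0_coef.
Proof.
  intros n. unfold S0_coef, Rdiv. pose proof (INR_fact_lt_0 n).
  pose proof (harm_le n). pose proof (INR_le_fact n).
  assert (Hinv : 0 < / INR (fact n) ^ 2) by (apply Rinv_0_lt_compat, pow_lt; lra).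
  rewrite Rmult_assoc, Rabs_mult, pow_1_abs, Rmult_1_l, Rabs_pos_eq by nra.
  apply Rle_trans with (INR (fact n) * / INR (fact n) ^ 2).
  - apply Rmult_le_compat_r; lra.
  - right. field. lra.
Qed.

(* Functions of s = (t/2)^2: [J0s s = J_0(t)] and [Y0s s = Y_0(t)] (see [hankel10_sqr]);
   primes denote d/ds. *)
Definition J0s := PSeries J0_coef.
Definition J0s' := PSeries (PS_derive J0_coef).
Definition J0s'' := PSeries (PS_derive (PS_derive J0_coef)).
Definition S0s := PSeries S0_coef.
Definition S0s' := PSeries (PS_derive S0_coef).
Definition S0s'' := PSeries (PS_derive (PS_derive S0_coef)).

Definition Y0s (s : R) : R :=
  2 / PI * ((ln s / 2 + euler_gamma) * J0s s + S0s s).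
Definition Y0s' (s : R) : R :=
  2 / PI * (J0s s / (2 * s) + (ln s / 2 + euler_gamma) * J0s' s + S0s' s).
Definition Y0s'' (s : R) : R :=
  2 / PI * (- J0s s / (2 * s ^ 2) + J0s' s / s + (ln s / 2 + euler_gamma) * J0s'' s
            + S0s'' s).

Lemma besselJ0_J0s t : besselJ0 t = J0s ((t / 2) ^ 2).
Proof.
  unfold besselJ0, J0s, PSeries. apply Series_ext. intros k.
  unfold J0_coef. rewrite pow_mult. unfold Rdiv. ring.
Qed.

Lemma hankel10_sqr t :
  0 < t -> hankel10 t = (J0s ((t / 2) ^ 2), Y0s ((t / 2) ^ 2)).
Proof.
  intros Ht. unfold hankel10, besselY0, Y0s. rewrite besselJ0_J0s, ln_pow by lra.
  replace (INR 2 * ln (t / 2) / 2) with (ln (t / 2)) by (simpl; field).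
  do 4 f_equal. unfold S0s, PSeries. apply Series_ext. intros k.
  unfold S0_coef. rewrite pow_mult. unfold Rdiv. ring.
Qed.

Lemma is_derive_J0s s : Rabs s <= / 2 -> is_derive J0s s (J0s' s).
Proof. apply fact_bounded_is_derive, fact_bounded_J0_coef. Qed.

Lemma is_derive_J0s' s : Rabs s <= / 2 -> is_derive J0s' s (J0s'' s).
Proof. apply fact_bounded_is_derive, fact_bounded_PS_derive, fact_bounded_J0_coef. Qed.

Lemma Derive_of_is_derive (f : R -> R) x l :
  is_derive f x l -> Derive (fun t => f t) x = l.
Proof. apply is_derive_unique. Qed.

Lemma is_derive_Y0s s : 0 < s <= / 2 -> is_derive Y0s s (Y0s' s).
Proof.
  intros Hs. assert (Habs : Rabs s <= / 2) by (rewrite Rabs_pos_eq; lra).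
  pose proof (is_derive_J0s s Habs) as HJ.
  assert (HS : is_derive S0s s (S0s' s))
    by exact (fact_bounded_is_derive _ _ fact_bounded_S0_coef Habs).
  unfold Y0s, Y0s'. auto_derive.
  - repeat split; try lra; eexists; eassumption.
  - rewrite (Derive_of_is_derive _ _ _ HJ),
      (Derive_of_is_derive _ _ _ HS).
    field. split; [lra | apply PI_neq0].
Qed.

Lemma is_derive_Y0s' s : 0 < s <= / 2 -> is_derive Y0s' s (Y0s'' s).
Proof.
  intros Hs. assert (Habs : Rabs s <= / 2) by (rewrite Rabs_pos_eq; lra).
  pose proof (is_derive_J0s s Habs) as HJ. pose proof (is_derive_J0s' s Habs) as HJ'.
  assert (HS : is_derive S0s' s (S0s'' s))
    by exact (fact_bounded_is_derive _ _
                (fact_bounded_PS_derive _ fact_bounded_S0_coef) Habs).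
  unfold Y0s', Y0s''. auto_derive.
  - repeat split; try lra; eexists; eassumption.
  - rewrite (Derive_of_is_derive _ _ _ HJ),
      (Derive_of_is_derive _ _ _ HJ'),
      (Derive_of_is_derive _ _ _ HS).
    field. split; [lra | apply PI_neq0].
Qed.

Lemma fact_bounded_ex_pseries a s :
  fact_bounded a -> Rabs s <= / 2 -> ex_pseries a s.
Proof. intros; now apply CV_radius_inside, fact_bounded_in_disk. Qed.

Definition J0s_tail := PSeries (PS_decr_n J0_coef 3).
Definition J0s'_tail := PSeries (PS_decr_n (PS_derive J0_coef) 2).
Definition J0s''_tail := PSeries (PS_decr_n (PS_derive (PS_derive J0_coef)) 1).
Definition S0s_tail := PSeries (PS_decr_n S0_coef 2).
Definition S0s'_tail := PSeries (PS_decr_n (PS_derive S0_coef) 2).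
Definition S0s''_tail := PSeries (PS_decr_n (PS_derive (PS_derive S0_coef)) 1).

Ltac split_PSeries n Ha :=
  unfold J0s, J0s', J0s'', S0s, S0s', S0s'', J0s_tail, J0s'_tail, J0s''_tail,
    S0s_tail, S0s'_tail, S0s''_tail;
  rewrite (PSeries_decr_n _ n) by (apply fact_bounded_ex_pseries; [exact Ha | assumption]);
  simpl sum_f_R0; unfold PS_derive, J0_coef, S0_coef; simpl; field.

Lemma J0s_expansion s :
  Rabs s <= / 2 -> J0s s = 1 - s + s ^ 2 / 4 + s ^ 3 * J0s_tail s.
Proof. intros Hs. split_PSeries 2%nat fact_bounded_J0_coef. Qed.

Lemma J0s'_expansion s :
  Rabs s <= / 2 -> J0s' s = -1 + s / 2 + s ^ 2 * J0s'_tail s.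
Proof. intros Hs. split_PSeries 1%nat (fact_bounded_PS_derive _ fact_bounded_J0_coef). Qed.

Lemma J0s''_expansion s : Rabs s <= / 2 -> J0s'' s = / 2 + s * J0s''_tail s.
Proof.
  intros Hs.
  split_PSeries 0%nat (fact_bounded_PS_derive _ (fact_bounded_PS_derive _ fact_bounded_J0_coef)).
Qed.

Lemma S0s_expansion s : Rabs s <= / 2 -> S0s s = s + s ^ 2 * S0s_tail s.
Proof. intros Hs. split_PSeries 1%nat fact_bounded_S0_coef. Qed.

Lemma S0s'_expansion s :
  Rabs s <= / 2 -> S0s' s = 1 - 3 / 4 * s + s ^ 2 * S0s'_tail s.
Proof. intros Hs. split_PSeries 1%nat (fact_bounded_PS_derive _ fact_bounded_S0_coef). Qed.

Lemma S0s''_expansion s : Rabs s <= / 2 -> S0s'' s = - 3 / 4 + s * S0s''_tail s.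
Proof.
  intros Hs.
  split_PSeries 0%nat (fact_bounded_PS_derive _ (fact_bounded_PS_derive _ fact_bounded_S0_coef)).
Qed.

Definition J0s_rem (s : R) : R := / 4 + s * J0s_tail s.
Definition Y0s_rem (s : R) : R :=
  (ln s / 2 + euler_gamma) * J0s_rem s + S0s_tail s.
Definition Y0s'_rem (s : R) : R :=
  / 2 * J0s_tail s + (ln s / 2 + euler_gamma) * J0s'_tail s + S0s'_tail s.
Definition Y0s''_rem (s : R) : R :=
  - / 2 * J0s_tail s + J0s'_tail s + (ln s / 2 + euler_gamma) * J0s''_tail s
  + S0s''_tail s.

Lemma J0s_expansion_rem s : Rabs s <= / 2 -> J0s s = 1 - s + s ^ 2 * J0s_rem s.
Proof. intros Hs. rewrite J0s_expansion by exact Hs. unfold J0s_rem. field. Qed.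

Lemma Y0s_expansion s :
  Rabs s <= / 2 ->
  Y0s s = 2 / PI * ((ln s / 2 + euler_gamma) * (1 - s) + s + s ^ 2 * Y0s_rem s).
Proof.
  intros Hs. unfold Y0s, Y0s_rem.
  rewrite J0s_expansion_rem, S0s_expansion by exact Hs. field. apply PI_neq0.
Qed.

Lemma Y0s'_expansion s :
  0 < s <= / 2 ->
  Y0s' s = 2 / PI * (/ (2 * s) + / 2 - 5 / 8 * s - (ln s / 2 + euler_gamma) * (1 - s / 2)
                     + s ^ 2 * Y0s'_rem s).
Proof.
  intros Hs. assert (Habs : Rabs s <= / 2) by (rewrite Rabs_pos_eq; lra).
  unfold Y0s', Y0s'_rem.
  rewrite J0s_expansion, J0s'_expansion, S0s'_expansion by exact Habs.
  field. split; [lra | apply PI_neq0].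
Qed.

Lemma Y0s''_expansion s :
  0 < s <= / 2 ->
  Y0s'' s = 2 / PI * (- / (2 * s ^ 2) - / (2 * s) - 3 / 8 + (ln s / 2 + euler_gamma) / 2
                      + s * Y0s''_rem s).
Proof.
  intros Hs. assert (Habs : Rabs s <= / 2) by (rewrite Rabs_pos_eq; lra).
  unfold Y0s'', Y0s''_rem.
  rewrite J0s_expansion, J0s'_expansion, J0s''_expansion, S0s''_expansion by exact Habs.
  field. split; [lra | apply PI_neq0].
Qed.

Definition log_bounded (b : R) (f : R -> R) : Prop :=
  exists C, 0 <= C /\ forall t, 0 < t <= b -> Rabs (f t) <= C * (1 + Rabs (ln t)).

Lemma log_bounded_of_le b f M :
  (forall t, 0 < t <= b -> Rabs (f t) <= M) -> log_bounded b f.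
Proof.
  intros Hf. exists (Rabs M). split; [apply Rabs_pos|]. intros t Ht.
  pose proof (Rabs_pos (ln t)). pose proof (Rle_abs M). pose proof (Rabs_pos M).
  specialize (Hf t Ht). nra.
Qed.

Lemma log_bounded_plus b f g :
  log_bounded b f -> log_bounded b g -> log_bounded b (fun t => f t + g t).
Proof.
  intros [C1 [HC1 H1]] [C2 [HC2 H2]]. exists (C1 + C2). split; [lra|]. intros t Ht.
  eapply Rle_trans; [apply Rabs_triang|]. specialize (H1 t Ht). specialize (H2 t Ht). lra.
Qed.

Lemma log_bounded_scal b c f :
  log_bounded b f -> log_bounded b (fun t => c * f t).
Proof.
  intros [C [HC H]]. exists (Rabs c * C). split; [apply Rmult_le_pos; auto; apply Rabs_pos|].
  intros t Ht. rewrite Rabs_mult, Rmult_assoc.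
  apply Rmult_le_compat_l; [apply Rabs_pos | auto].
Qed.

Lemma log_bounded_scal_r b c f :
  log_bounded b f -> log_bounded b (fun t => f t * c).
Proof.
  intros Hf. destruct (log_bounded_scal b c f Hf) as [C [HC H]]. exists C. split; auto.
  intros t Ht. rewrite Rmult_comm. auto.
Qed.

Lemma log_bounded_minus b f g :
  log_bounded b f -> log_bounded b g -> log_bounded b (fun t => f t - g t).
Proof.
  intros Hf [C [HC H]]. apply (log_bounded_plus b f (fun t => - g t)); auto.
  exists C. split; auto. intros t Ht. rewrite Rabs_Ropp. auto.
Qed.

Lemma log_bounded_mul_le b f g M :
  log_bounded b f -> (forall t, 0 < t <= b -> Rabs (g t) <= M) ->
  log_bounded b (fun t => f t * g t).
Proof.
  intros [C [HC H]] Hg. exists (C * Rabs M). split; [apply Rmult_le_pos; auto; apply Rabs_pos|].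
  intros t Ht. rewrite Rabs_mult. specialize (H t Ht). specialize (Hg t Ht).
  pose proof (Rle_abs M). pose proof (Rabs_pos (f t)). pose proof (Rabs_pos (ln t)).
  apply Rle_trans with (C * (1 + Rabs (ln t)) * Rabs M); [|nra].
  apply Rmult_le_compat; auto using Rabs_pos; lra.
Qed.

Lemma log_bounded_ln_gamma b : log_bounded b (fun t => ln t / 2 + euler_gamma).
Proof.
  exists (/ 2 + Rabs euler_gamma). split; [pose proof (Rabs_pos euler_gamma); lra|].
  intros t _. eapply Rle_trans; [apply Rabs_triang|].
  unfold Rdiv. rewrite Rabs_mult, (Rabs_pos_eq (/ 2)) by lra.
  pose proof (Rabs_pos (ln t)). pose proof (Rabs_pos euler_gamma). nra.
Qed.

Lemma log_bounded_comp_sqr b f c q :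
  log_bounded (/ 2) f -> 0 < c -> 0 < q -> c * b ^ 2 * q <= / 2 ->
  log_bounded b (fun t => f (c * t ^ 2 * q)).
Proof.
  intros [C [HC H]] Hc Hq Hb. exists (C * (2 + Rabs (ln (c * q)))).
  split; [pose proof (Rabs_pos (ln (c * q))); nra|]. intros t Ht.
  assert (Hs : 0 < c * t ^ 2 * q <= / 2).
  { split; [apply Rmult_lt_0_compat; [apply Rmult_lt_0_compat, pow_lt|]; lra|].
    eapply Rle_trans; [|exact Hb]. apply Rmult_le_compat_r; [lra|].
    apply Rmult_le_compat_l; [lra|]. apply pow_incr; lra. }
  assert (Hln : ln (c * t ^ 2 * q) = ln (c * q) + 2 * ln t).
  { rewrite !ln_mult, ln_pow by (try apply pow_lt; try apply Rmult_lt_0_compat;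
                                 try apply pow_lt; lra). simpl. ring. }
  eapply Rle_trans; [exact (H _ Hs)|]. rewrite Hln.
  pose proof (Rabs_triang (ln (c * q)) (2 * ln t)) as Htri.
  rewrite Rabs_mult, (Rabs_pos_eq 2) in Htri by lra.
  pose proof (Rabs_pos (ln (c * q))). pose proof (Rabs_pos (ln t)).
  apply Rle_trans with (C * (1 + Rabs (ln (c * q)) + 2 * Rabs (ln t))).
  - apply Rmult_le_compat_l; lra.
  - assert (0 <= C * (Rabs (ln (c * q)) * Rabs (ln t))) by (apply Rmult_le_pos; nra).
    nra.
Qed.

Lemma log_bounded_uniform_bool2 b (f : bool -> bool -> R -> R) :
  (forall i j, log_bounded b (f i j)) ->
  exists C, 0 <= C /\
    forall i j t, 0 < t <= b -> Rabs (f i j t) <= C * (1 + Rabs (ln t)).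
Proof.
  intros Hf.
  destruct (Hf true true) as [C1 [HC1 H1]], (Hf true false) as [C2 [HC2 H2]],
    (Hf false true) as [C3 [HC3 H3]], (Hf false false) as [C4 [HC4 H4]].
  exists (C1 + C2 + C3 + C4). split; [lra|]. intros i j t Ht.
  pose proof (Rabs_pos (ln t)).
  destruct i, j; [specialize (H1 t Ht) | specialize (H2 t Ht) | specialize (H3 t Ht)
                 | specialize (H4 t Ht)]; nra.
Qed.

Lemma Rabs_PSeries_tail_le a k s :
  fact_bounded a -> 0 < s <= / 2 -> Rabs (PSeries (PS_decr_n a k) s) <= 2.
Proof.
  intros Ha Hs. apply fact_bounded_PSeries_le; [now apply fact_bounded_PS_decr_n|].
  rewrite Rabs_pos_eq; lra.
Qed.

Lemma Rabs_J0s_rem_le s : 0 < s <= / 2 -> Rabs (J0s_rem s) <= 2.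
Proof.
  intros Hs. unfold J0s_rem. pose proof (Rabs_PSeries_tail_le _ 3 s fact_bounded_J0_coef Hs).
  eapply Rle_trans; [apply Rabs_triang|].
  rewrite Rabs_mult, (Rabs_pos_eq (/ 4)), Rabs_pos_eq by lra. unfold J0s_tail. nra.
Qed.

Lemma log_bounded_tail a k : fact_bounded a -> log_bounded (/ 2) (PSeries (PS_decr_n a k)).
Proof. intros Ha. apply (log_bounded_of_le _ _ 2). intros. now apply Rabs_PSeries_tail_le. Qed.

Lemma log_bounded_J0s_rem : log_bounded (/ 2) J0s_rem.
Proof. apply (log_bounded_of_le _ _ 2), Rabs_J0s_rem_le. Qed.

Lemma log_bounded_J0s'_tail : log_bounded (/ 2) J0s'_tail.
Proof. apply log_bounded_tail, fact_bounded_PS_derive, fact_bounded_J0_coef. Qed.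

Lemma log_bounded_J0s''_tail : log_bounded (/ 2) J0s''_tail.
Proof.
  apply log_bounded_tail, fact_bounded_PS_derive, fact_bounded_PS_derive, fact_bounded_J0_coef.
Qed.

Lemma log_bounded_ln_gamma_mul_tail a k :
  fact_bounded a ->
  log_bounded (/ 2) (fun s => (ln s / 2 + euler_gamma) * PSeries (PS_decr_n a k) s).
Proof.
  intros Ha. apply (log_bounded_mul_le _ _ _ 2); [apply log_bounded_ln_gamma|].
  intros. now apply Rabs_PSeries_tail_le.
Qed.

Lemma log_bounded_Y0s_rem : log_bounded (/ 2) Y0s_rem.
Proof.
  apply log_bounded_plus.
  - apply (log_bounded_mul_le _ _ _ 2); [apply log_bounded_ln_gamma | apply Rabs_J0s_rem_le].
  - apply log_bounded_tail, fact_bounded_S0_coef.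
Qed.

Lemma log_bounded_Y0s'_rem : log_bounded (/ 2) Y0s'_rem.
Proof.
  pose proof (fact_bounded_PS_derive _ fact_bounded_J0_coef).
  repeat apply log_bounded_plus.
  - apply log_bounded_scal, log_bounded_tail, fact_bounded_J0_coef.
  - now apply log_bounded_ln_gamma_mul_tail.
  - apply log_bounded_tail, fact_bounded_PS_derive, fact_bounded_S0_coef.
Qed.

Lemma log_bounded_Y0s''_rem : log_bounded (/ 2) Y0s''_rem.
Proof.
  pose proof (fact_bounded_PS_derive _ fact_bounded_J0_coef).
  repeat apply log_bounded_plus.
  - apply log_bounded_scal, log_bounded_tail, fact_bounded_J0_coef.
  - now apply log_bounded_tail.
  - now apply log_bounded_ln_gamma_mul_tail, fact_bounded_PS_derive.
  - apply log_bounded_tail, fact_bounded_PS_derive, fact_bounded_PS_derive, fact_bounded_S0_coef.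
Qed.

Create HintDb log_bounded.
#[local] Hint Resolve log_bounded_J0s_rem log_bounded_J0s'_tail log_bounded_J0s''_tail
  log_bounded_Y0s_rem log_bounded_Y0s'_rem log_bounded_Y0s''_rem : log_bounded.

Ltac solve_log_bounded :=
  match goal with
  | |- log_bounded _ (fun t => @?f t + @?g t) =>
      apply (log_bounded_plus _ f g); solve_log_bounded
  | |- log_bounded _ (fun t => @?f t - @?g t) =>
      apply (log_bounded_minus _ f g); solve_log_bounded
  | |- log_bounded _ (fun t => ?c * @?f t) =>
      apply (log_bounded_scal _ c f); solve_log_bounded
  | |- log_bounded _ (fun t => @?f t * ?c) =>
      apply (log_bounded_scal_r _ c f); solve_log_bounded
  | |- log_bounded _ (fun t => ?F (?c * t ^ 2 * ?q)) =>
      apply (log_bounded_comp_sqr _ F c q); auto with log_bounded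
  end.

Definition sqnorm (y : R * R) : R := fst y ^ 2 + snd y ^ 2.

Lemma sqnorm_pos x : x <> (0, 0) -> 0 < sqnorm x.
Proof.
  intros Hx. destruct x as [x1 x2]. unfold sqnorm; simpl.
  destruct (Req_dec x1 0) as [->|H1]; [destruct (Req_dec x2 0) as [->|H2]|].
  - now destruct Hx.
  - pose proof (pow2_gt_0 x2 H2). nra.
  - pose proof (pow2_gt_0 x1 H1). pose proof (pow2_ge_0 x2). lra.
Qed.

Lemma norm2_sqr x : norm2 x ^ 2 = sqnorm x.
Proof.
  unfold norm2, sqnorm. rewrite pow2_sqrt; [reflexivity|].
  pose proof (pow2_ge_0 (fst x)). pose proof (pow2_ge_0 (snd x)). lra.
Qed.

Lemma sqnorm_setc y i t : sqnorm (setc y i t) = coord y (negb i) ^ 2 + t ^ 2.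
Proof. destruct i; unfold sqnorm; simpl; ring. Qed.

Lemma sqnorm_coord y i : sqnorm y = coord y (negb i) ^ 2 + coord y i ^ 2.
Proof. destruct i; unfold sqnorm; simpl; ring. Qed.

Lemma locally_between (h : R -> R) t0 a b :
  continuity_pt h t0 -> a < h t0 < b -> locally t0 (fun t => a < h t < b).
Proof.
  intros Hc Hab. assert (He : 0 < Rmin (h t0 - a) (b - h t0)) by (apply Rmin_pos; lra).
  apply continuity_pt_locally with (eps := mkposreal _ He) in Hc.
  eapply filter_imp; [|exact Hc]. intros u Hu. simpl in Hu.
  pose proof (Rmin_l (h t0 - a) (b - h t0)). pose proof (Rmin_r (h t0 - a) (b - h t0)).
  apply Rabs_def2 in Hu. lra.
Qed.

Section RadialDerivatives.

Variables (Q0 Q1 : R).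

Lemma is_derive_comp_shifted_sqr (H H1 : R -> R) c t :
  (forall q, Q0 < q < Q1 -> is_derive H q (H1 q)) -> Q0 < c + t ^ 2 < Q1 ->
  is_derive (fun u => H (c + u ^ 2)) t (2 * t * H1 (c + t ^ 2)).
Proof.
  intros HH Ht. pose proof (HH _ Ht) as HD. auto_derive.
  - eexists; exact HD.
  - match goal with |- context [Derive _ ?a] => replace a with (c + t ^ 2) by ring end.
    rewrite (Derive_of_is_derive _ _ _ HD). ring.
Qed.

Lemma locally_shifted_sqr c t :
  Q0 < c + t ^ 2 < Q1 -> locally t (fun u => Q0 < c + u ^ 2 < Q1).
Proof. intros; apply (locally_between (fun u => c + u ^ 2)); [reg | assumption]. Qed.

Variables (G G1 G2 : R -> R).
Hypothesis HG : forall q, Q0 < q < Q1 -> is_derive G q (G1 q).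
Hypothesis HG1 : forall q, Q0 < q < Q1 -> is_derive G1 q (G2 q).

Lemma partial_radial (f : R * R -> R) y j :
  (forall y, Q0 < sqnorm y < Q1 -> f y = G (sqnorm y)) -> Q0 < sqnorm y < Q1 ->
  partial j f y = 2 * coord y j * G1 (sqnorm y).
Proof.
  intros Hf Hy. unfold partial. apply is_derive_unique.
  rewrite (sqnorm_coord y j) in Hy |- *.
  apply (is_derive_ext_loc (fun u => G (coord y (negb j) ^ 2 + u ^ 2))).
  - eapply filter_imp; [|exact (locally_shifted_sqr _ _ Hy)]. intros u Hu.
    rewrite Hf, sqnorm_setc; [reflexivity|]. now rewrite sqnorm_setc.
  - now apply is_derive_comp_shifted_sqr.
Qed.

Lemma hessian_radial (f : R * R -> R) x i j :
  (forall y, Q0 < sqnorm y < Q1 -> f y = G (sqnorm y)) -> Q0 < sqnorm x < Q1 ->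
  partial i (partial j f) x
  = 4 * G2 (sqnorm x) * (coord x i * coord x j) + 2 * G1 (sqnorm x) * kron i j.
Proof.
  intros Hf Hx. unfold partial at 1. apply is_derive_unique.
  rewrite (sqnorm_coord x i) in Hx |- *. set (c := coord x (negb i) ^ 2) in *.
  apply (is_derive_ext_loc (fun u => 2 * coord (setc x i u) j * G1 (c + u ^ 2))).
  - eapply filter_imp; [|exact (locally_shifted_sqr _ _ Hx)]. intros u Hu.
    rewrite (partial_radial f _ j Hf), sqnorm_setc; [reflexivity|]. now rewrite sqnorm_setc.
  - pose proof (HG1 _ Hx) as HD.
    (* [auto_derive] writes [u ^ 2] as [u * (u * 1)]. *)
    destruct i, j; simpl coord in *; unfold kron; simpl Bool.eqb; auto_derive;
      match goal with |- context [c + ?t * (?t * 1)] =>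
        replace (c + t * (t * 1)) with (c + t ^ 2) by ring end;
      first [eexists; exact HD | rewrite (Derive_of_is_derive _ _ _ HD); ring].
Qed.

End RadialDerivatives.

Lemma is_derive_dilation_diff (F F1 : R -> R) a b Kp Ks q :
  (forall s, 0 < s <= / 2 -> is_derive F s (F1 s)) ->
  0 < Kp * q <= / 2 -> 0 < Ks * q <= / 2 ->
  is_derive (fun q => a * F (Kp * q) - b * F (Ks * q)) q
            (a * Kp * F1 (Kp * q) - b * Ks * F1 (Ks * q)).
Proof.
  intros HF Hp Hs. pose proof (HF _ Hp) as Dp. pose proof (HF _ Hs) as Ds. auto_derive.
  - repeat split; eexists; eassumption.
  - rewrite (Derive_of_is_derive _ _ _ Dp), (Derive_of_is_derive _ _ _ Ds). ring.
Qed.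

Definition radial_hess_diff (F1 F2 : R -> R) (Kp Ks : R) (x : R * R) (i j : bool) : R :=
  4 * (Kp ^ 2 * F2 (Kp * sqnorm x) - Ks ^ 2 * F2 (Ks * sqnorm x)) * (coord x i * coord x j)
  + 2 * (Kp * F1 (Kp * sqnorm x) - Ks * F1 (Ks * sqnorm x)) * kron i j.

Lemma hessian_dilation_diff (F F1 F2 : R -> R) (f : R * R -> R) Kp Ks x i j :
  (forall s, 0 < s <= / 2 -> is_derive F s (F1 s)) ->
  (forall s, 0 < s <= / 2 -> is_derive F1 s (F2 s)) ->
  0 < Kp -> 0 < Ks -> 0 < sqnorm x ->
  2 * Kp * sqnorm x <= / 2 -> 2 * Ks * sqnorm x <= / 2 ->
  (forall y, 0 < sqnorm y -> f y = F (Kp * sqnorm y) - F (Ks * sqnorm y)) ->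
  partial i (partial j f) x = radial_hess_diff F1 F2 Kp Ks x i j.
Proof.
  intros HF HF1 Hp Hs Hx HpQ HsQ Hf.
  assert (Hin : forall K q, 0 < K -> 2 * K * sqnorm x <= / 2 ->
                 sqnorm x / 2 < q < 2 * sqnorm x -> 0 < K * q <= / 2)
    by (intros; split; nra).
  rewrite (hessian_radial (sqnorm x / 2) (2 * sqnorm x)
             (fun q => 1 * F (Kp * q) - 1 * F (Ks * q))
             (fun q => 1 * Kp * F1 (Kp * q) - 1 * Ks * F1 (Ks * q))
             (fun q => 1 * Kp * Kp * F2 (Kp * q) - 1 * Ks * Ks * F2 (Ks * q))).
  - unfold radial_hess_diff. ring.
  - intros q Hq. apply is_derive_dilation_diff; auto.
  - intros q Hq. apply is_derive_dilation_diff; auto.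
  - intros y Hy. rewrite Hf by lra. ring.
  - lra.
Qed.

Lemma hankel10_radial k y :
  0 < k -> 0 < sqnorm y ->
  hankel10 (k * norm2 y) = (J0s ((k / 2) ^ 2 * sqnorm y), Y0s ((k / 2) ^ 2 * sqnorm y)).
Proof.
  intros Hk Hy.
  assert (Hn : 0 < norm2 y) by (apply sqrt_lt_R0; exact Hy).
  rewrite hankel10_sqr by (apply Rmult_lt_0_compat; lra).
  replace ((k * norm2 y / 2) ^ 2) with ((k / 2) ^ 2 * sqnorm y); [reflexivity|].
  rewrite <- norm2_sqr. field.
Qed.

Lemma half_wavenumber_sqr w m r :
  0 < m -> 0 < r -> (w / sqrt (m / r) / 2) ^ 2 = r / (4 * m) * w ^ 2.
Proof.
  intros Hm Hr. assert (Hs : 0 < sqrt (m / r)) by (apply sqrt_lt_R0, Rdiv_lt_0_compat; lra).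
  replace ((w / sqrt (m / r) / 2) ^ 2) with (w ^ 2 / (4 * sqrt (m / r) ^ 2)) by (field; lra).
  rewrite pow2_sqrt by (apply Rlt_le, Rdiv_lt_0_compat; lra). field. lra.
Qed.

Lemma Ci_combination (a b u v m r d : R) :
  m <> 0 -> r <> 0 ->
  (- (Ci / RtoC m) * (a, b) * RtoC d + (Ci / RtoC r) * (u, v))%C
  = (b * d / m - v / r, - a * d / m + u / r).
Proof. intros Hm Hr. apply injective_projections; simpl; field; auto. Qed.

Lemma Gamma_omega_closed_form lamp mup rhop w x i j :
  0 < mup -> 0 < lamp + 2 * mup -> 0 < rhop -> 0 < w -> 0 < sqnorm x ->
  let Ks := rhop / (4 * mup) * w ^ 2 in
  let Kp := rhop / (4 * (lamp + 2 * mup)) * w ^ 2 in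
  2 * Kp * sqnorm x <= / 2 -> 2 * Ks * sqnorm x <= / 2 ->
  Gamma_omega lamp mup rhop w x i j =
  (Y0s (Ks * sqnorm x) * kron i j / (4 * mup)
     - radial_hess_diff Y0s' Y0s'' Kp Ks x i j / (4 * w ^ 2 * rhop),
   - J0s (Ks * sqnorm x) * kron i j / (4 * mup)
     + radial_hess_diff J0s' J0s'' Kp Ks x i j / (4 * w ^ 2 * rhop)).
Proof.
  intros Hm Ha Hr Hw Hx Ks Kp HpQ HsQ.
  assert (Hk : forall m, 0 < m -> 0 < w / sqrt (m / rhop))
    by (intros; apply Rdiv_lt_0_compat, sqrt_lt_R0, Rdiv_lt_0_compat; lra).
  assert (HKs : 0 < Ks) by (apply Rmult_lt_0_compat, pow_lt; [apply Rdiv_lt_0_compat|]; lra).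
  assert (HKp : 0 < Kp) by (apply Rmult_lt_0_compat, pow_lt; [apply Rdiv_lt_0_compat|]; lra).
  assert (HJ : forall s, 0 < s <= / 2 -> is_derive J0s s (J0s' s))
    by (intros s Hs; apply is_derive_J0s; rewrite Rabs_pos_eq; lra).
  assert (HJ' : forall s, 0 < s <= / 2 -> is_derive J0s' s (J0s'' s))
    by (intros s Hs; apply is_derive_J0s'; rewrite Rabs_pos_eq; lra).
  unfold Gamma_omega, hessC. cbv zeta.
  rewrite (hessian_dilation_diff J0s J0s' J0s'' _ Kp Ks x i j HJ HJ' HKp HKs Hx HpQ HsQ).
  2:{ intros y Hy. rewrite !hankel10_radial, !half_wavenumber_sqr by auto. reflexivity. }
  rewrite (hessian_dilation_diff Y0s Y0s' Y0s'' _ Kp Ks x i j is_derive_Y0s is_derive_Y0s'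
             HKp HKs Hx HpQ HsQ).
  2:{ intros y Hy. rewrite !hankel10_radial, !half_wavenumber_sqr by auto. reflexivity. }
  rewrite hankel10_radial, half_wavenumber_sqr by auto.
  assert (0 < w ^ 2) by (apply pow_lt; lra).
  rewrite Ci_combination by (apply Rgt_not_eq; nra). reflexivity.
Qed.

Lemma Cmod_sub_le (z1 z2 : C) :
  Cmod (z1 - z2)%C <= Rabs (fst z1 - fst z2) + Rabs (snd z1 - snd z2).
Proof.
  change (Cmod (z1 - z2)%C <= Rabs (fst (z1 - z2)%C) + Rabs (snd (z1 - z2)%C)).
  destruct (z1 - z2)%C as [a b]. unfold Cmod; cbn [fst snd].
  pose proof (Rabs_pos a). pose proof (Rabs_pos b).
  rewrite <- (sqrt_pow2 (Rabs a + Rabs b)) by lra. apply sqrt_le_1_alt.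
  rewrite <- (pow2_abs a), <- (pow2_abs b). nra.
Qed.

Lemma small_radius k : 0 <= k -> exists b, 0 < b <= exp (-2) /\ k * b ^ 2 <= 1.
Proof.
  intros Hk. exists (Rmin (exp (-2)) (/ (1 + k))).
  pose proof (Rmin_l (exp (-2)) (/ (1 + k))). pose proof (Rmin_r (exp (-2)) (/ (1 + k))).
  assert (Hpos : 0 < Rmin (exp (-2)) (/ (1 + k)))
    by (apply Rmin_pos; [apply exp_pos | apply Rinv_0_lt_compat; lra]).
  assert (/ (1 + k) <= 1) by (rewrite <- Rinv_1; apply Rinv_le_contravar; lra).
  assert (k * / (1 + k) <= 1) by (apply (Rmult_le_reg_r (1 + k)); [lra|]; field_simplify; lra).
  split; [lra|]. set (b := Rmin (exp (-2)) (/ (1 + k))) in *. nra.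
Qed.

Lemma w4_one_add_abs_ln_le C D w :
  0 <= C -> 0 < D -> 0 < w <= exp (-2) ->
  C * w ^ 4 * (1 + Rabs (ln w)) <= 3 * C / D * Rabs (D * w ^ 4 * ln w + D * w ^ 4).
Proof.
  intros HC HD Hw.
  assert (Hln : ln w <= -2) by (rewrite <- (ln_exp (-2)); apply ln_le; lra).
  assert (Hw4 : 0 < w ^ 4) by (apply pow_lt; lra).
  rewrite (Rabs_left (ln w)) by lra.
  replace (D * w ^ 4 * ln w + D * w ^ 4) with (- (D * w ^ 4 * (- ln w - 1))) by ring.
  rewrite Rabs_Ropp, Rabs_pos_eq by (apply Rmult_le_pos; [apply Rmult_le_pos|]; lra).
  replace (3 * C / D * (D * w ^ 4 * (- ln w - 1))) with (C * w ^ 4 * (3 * (- ln w - 1)))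
    by (field; lra).
  apply Rmult_le_compat_l; [apply Rmult_le_pos|]; lra.
Qed.

(* omega^-4 times the real (resp. imaginary) part of Gamma^omega - expansion, for the scaled
   parameters [mup], [ap = lamp + 2 mup], [rhop]: here [cS w^2 = (k_s/2)^2],
   [cP w^2 = (k_p/2)^2], [q = |x|^2], [P = x_i x_j] and [d = kron i j]. *)
Definition re_remainder (mup ap rhop q P d w : R) : R :=
  let cS := rhop / (4 * mup) in let cP := rhop / (4 * ap) in
  let sS := cS * w ^ 2 * q in let sP := cP * w ^ 2 * q in
  d / (2 * PI * mup) * (cS * q) ^ 2 * Y0s_rem sS
  - / (2 * PI * rhop)
    * (4 * cP ^ 2 * (cP * q) * Y0s''_rem sP * P + 2 * cP * (cP * q) ^ 2 * Y0s'_rem sP * d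
       - 4 * cS ^ 2 * (cS * q) * Y0s''_rem sS * P - 2 * cS * (cS * q) ^ 2 * Y0s'_rem sS * d).

Definition im_remainder (mup ap rhop q P d w : R) : R :=
  let cS := rhop / (4 * mup) in let cP := rhop / (4 * ap) in
  let sS := cS * w ^ 2 * q in let sP := cP * w ^ 2 * q in
  - d / (4 * mup) * (cS * q) ^ 2 * J0s_rem sS
  + / (4 * rhop)
    * (4 * cP ^ 2 * (cP * q) * J0s''_tail sP * P + 2 * cP * (cP * q) ^ 2 * J0s'_tail sP * d
       - 4 * cS ^ 2 * (cS * q) * J0s''_tail sS * P - 2 * cS * (cS * q) ^ 2 * J0s'_tail sS * d).

Section ScaledExpansion.

Variables (lam mu rho delta eps : R) (x : R * R).
Hypotheses (Hmu : 0 < mu) (Ha : 0 < lam + 2 * mu) (Hrho : 0 < rho) (Hdelta : 0 < delta)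
  (Heps : 0 < eps) (Hx : 0 < sqnorm x).

Local Notation tau := (sqrt (delta / eps)).
Local Notation cS := (rho / eps / (4 * (mu / delta))).
Local Notation cP := (rho / eps / (4 * (lam / delta + 2 * (mu / delta)))).

Lemma ln_scaled_sqr_wavenumber m w :
  0 < m -> 0 < w ->
  ln (rho / eps / (4 * (m / delta)) * w ^ 2 * sqnorm x)
  = 2 * ln (sqrt rho * tau) + 2 * ln w + 2 * ln (norm2 x) - 2 * ln 2 - ln m.
Proof.
  intros Hm Hw.
  assert (Hn : 0 < norm2 x) by (apply sqrt_lt_R0; exact Hx).
  assert (Ht : 0 < tau) by (apply sqrt_lt_R0, Rdiv_lt_0_compat; lra).
  assert (Hr : 0 < sqrt rho) by (apply sqrt_lt_R0; lra).
  replace (rho / eps / (4 * (m / delta)) * w ^ 2 * sqnorm x)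
    with ((sqrt rho * tau * w * norm2 x) ^ 2 / (2 ^ 2 * m)).
  - rewrite ln_div, ln_mult, !ln_pow, !ln_mult
      by (try apply pow_lt; repeat apply Rmult_lt_0_compat; try apply pow_lt; lra).
    change (INR 2) with (1 + 1). ring.
  - rewrite !Rpow_mult_distr, !pow2_sqrt, norm2_sqr by (try apply Rlt_le, Rdiv_lt_0_compat; lra).
    field. lra.
Qed.

Lemma ln_sS w : 0 < w ->
  ln (cS * w ^ 2 * sqnorm x)
  = 2 * ln (sqrt rho * tau) + 2 * ln w + 2 * ln (norm2 x) - 2 * ln 2 - ln mu.
Proof. now apply ln_scaled_sqr_wavenumber. Qed.

Lemma ln_sP w : 0 < w ->
  ln (cP * w ^ 2 * sqnorm x)
  = 2 * ln (sqrt rho * tau) + 2 * ln w + 2 * ln (norm2 x) - 2 * ln 2 - ln (2 * mu + lam).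
Proof.
  intros Hw. replace (lam / delta + 2 * (mu / delta)) with ((2 * mu + lam) / delta)
    by (field; lra).
  apply ln_scaled_sqr_wavenumber; lra.
Qed.

Lemma scaled_lame_pos : 0 < lam / delta + 2 * (mu / delta).
Proof.
  replace (lam / delta + 2 * (mu / delta)) with ((lam + 2 * mu) / delta) by (field; lra).
  apply Rdiv_lt_0_compat; lra.
Qed.

Lemma cS_pos : 0 < cS.
Proof.
  assert (0 < mu / delta) by (apply Rdiv_lt_0_compat; lra).
  apply Rdiv_lt_0_compat; [apply Rdiv_lt_0_compat|]; lra.
Qed.

Lemma cP_pos : 0 < cP.
Proof. pose proof scaled_lame_pos. apply Rdiv_lt_0_compat; [apply Rdiv_lt_0_compat|]; lra. Qed.

Lemma scaled_args_small w :
  0 < w -> 4 * (cS + cP) * w ^ 2 * sqnorm x <= 1 ->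
  0 < cS * w ^ 2 * sqnorm x <= / 4 /\ 0 < cP * w ^ 2 * sqnorm x <= / 4.
Proof.
  intros Hw Hsmall.
  pose proof cS_pos. pose proof cP_pos.
  assert (0 < w ^ 2) by (apply pow_lt; lra).
  assert (0 < cS * w ^ 2 * sqnorm x) by (apply Rmult_lt_0_compat; [apply Rmult_lt_0_compat|]; lra).
  assert (0 < cP * w ^ 2 * sqnorm x) by (apply Rmult_lt_0_compat; [apply Rmult_lt_0_compat|]; lra).
  split; split; nra.
Qed.

Lemma Gamma_omega_re_sub_expansion w i j :
  0 < w -> 4 * (cS + cP) * w ^ 2 * sqnorm x <= 1 ->
  fst (Gamma_omega (lam / delta) (mu / delta) (rho / eps) w x i j)
  - fst (expansion lam mu rho delta tau w x i j)
  = w ^ 4 * re_remainder (mu / delta) (lam / delta + 2 * (mu / delta)) (rho / eps)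
                         (sqnorm x) (coord x i * coord x j) (kron i j) w.
Proof.
  intros Hw Hsmall. destruct (scaled_args_small w Hw Hsmall) as [HS HP].
  pose proof scaled_lame_pos.
  rewrite Gamma_omega_closed_form by (try apply Rdiv_lt_0_compat; nra).
  cbn [fst]. unfold radial_hess_diff.
  assert (HS' : Rabs (cS * w ^ 2 * sqnorm x) <= / 2) by (rewrite Rabs_pos_eq; lra).
  rewrite (Y0s_expansion _ HS'), !Y0s'_expansion, !Y0s''_expansion by lra.
  rewrite ln_sS, ln_sP by lra.
  unfold expansion, Gamma0, Gamma1, Gamma2, gamma_tw, alpha_c, beta1, beta4, Ec.
  rewrite pow2_sqrt, norm2_sqr by (apply Rlt_le, Rdiv_lt_0_compat; lra).
  rewrite (ln_mult (sqrt rho * tau)) by (try apply Rmult_lt_0_compat; try apply sqrt_lt_R0;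
                                         try apply Rdiv_lt_0_compat; lra).
  cbn [fst snd Cplus Cmult Cminus Copp RtoC].
  unfold re_remainder, alpha1, alpha2, beta2, beta3.
  field. repeat split; (apply PI_neq0 || lra).
Qed.

Lemma Gamma_omega_im_sub_expansion w i j :
  0 < w -> 4 * (cS + cP) * w ^ 2 * sqnorm x <= 1 ->
  snd (Gamma_omega (lam / delta) (mu / delta) (rho / eps) w x i j)
  - snd (expansion lam mu rho delta tau w x i j)
  = w ^ 4 * im_remainder (mu / delta) (lam / delta + 2 * (mu / delta)) (rho / eps)
                         (sqnorm x) (coord x i * coord x j) (kron i j) w.
Proof.
  intros Hw Hsmall. destruct (scaled_args_small w Hw Hsmall) as [HS HP].
  pose proof scaled_lame_pos.
  rewrite Gamma_omega_closed_form by (try apply Rdiv_lt_0_compat; nra).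
  cbn [snd]. unfold radial_hess_diff.
  rewrite J0s_expansion_rem, !J0s'_expansion, !J0s''_expansion by (rewrite Rabs_pos_eq; lra).
  unfold expansion, Gamma0, Gamma1, Gamma2, gamma_tw, alpha_c, beta1, beta4, Ec.
  rewrite pow2_sqrt, norm2_sqr by (apply Rlt_le, Rdiv_lt_0_compat; lra).
  cbn [fst snd Cplus Cmult Cminus Copp RtoC].
  unfold im_remainder, alpha1, alpha2, beta2, beta3.
  field. repeat split; (apply PI_neq0 || lra).
Qed.

Lemma remainders_log_bounded b i j :
  0 < b -> 4 * (cS + cP) * b ^ 2 * sqnorm x <= 1 ->
  log_bounded b (re_remainder (mu / delta) (lam / delta + 2 * (mu / delta)) (rho / eps)
                              (sqnorm x) (coord x i * coord x j) (kron i j))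
  /\ log_bounded b (im_remainder (mu / delta) (lam / delta + 2 * (mu / delta)) (rho / eps)
                                (sqnorm x) (coord x i * coord x j) (kron i j)).
Proof.
  intros Hb Hsmall. destruct (scaled_args_small b Hb Hsmall).
  pose proof cS_pos. pose proof cP_pos.
  assert (cS * b ^ 2 * sqnorm x <= / 2) by lra.
  assert (cP * b ^ 2 * sqnorm x <= / 2) by lra.
  split; cbv beta zeta delta [re_remainder im_remainder]; solve_log_bounded.
Qed.

Lemma Gamma_omega_sub_expansion_le :
  exists C b, 0 <= C /\ 0 < b <= exp (-2) /\
    forall w i j, 0 < w <= b ->
      Cmod (Gamma_omega (lam / delta) (mu / delta) (rho / eps) w x i j
            - expansion lam mu rho delta tau w x i j)%C
      <= C * w ^ 4 * (1 + Rabs (ln w)).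
Proof.
  pose proof cS_pos. pose proof cP_pos.
  destruct (small_radius (4 * (cS + cP) * sqnorm x)) as [b [Hb Hsmall]]; [nra|].
  assert (Hsmall_b : 4 * (cS + cP) * b ^ 2 * sqnorm x <= 1) by lra.
  destruct (log_bounded_uniform_bool2 b (fun i j => re_remainder (mu / delta)
              (lam / delta + 2 * (mu / delta)) (rho / eps) (sqnorm x) (coord x i * coord x j)
              (kron i j))) as [C1 [HC1 H1]];
    [intros i j; now apply remainders_log_bounded|].
  destruct (log_bounded_uniform_bool2 b (fun i j => im_remainder (mu / delta)
              (lam / delta + 2 * (mu / delta)) (rho / eps) (sqnorm x) (coord x i * coord x j)
              (kron i j))) as [C2 [HC2 H2]];
    [intros i j; now apply remainders_log_bounded|].
  exists (C1 + C2), b. split; [lra | split; [lra|]]. intros w i j Hw.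
  assert (Hsmall_w : 4 * (cS + cP) * w ^ 2 * sqnorm x <= 1).
  { eapply Rle_trans; [|exact Hsmall_b]. apply Rmult_le_compat_r; [lra|].
    apply Rmult_le_compat_l; [lra|]. apply pow_incr; lra. }
  eapply Rle_trans; [apply Cmod_sub_le|].
  rewrite Gamma_omega_re_sub_expansion, Gamma_omega_im_sub_expansion by lra.
  rewrite !Rabs_mult, (Rabs_pos_eq (w ^ 4)) by (apply pow_le; lra).
  specialize (H1 i j w Hw). specialize (H2 i j w Hw). cbv beta in H1, H2.
  assert (0 <= w ^ 4) by (apply pow_le; lra). nra.
Qed.

End ScaledExpansion.

Theorem proposition2p3 (lam mu rho delta eps : R) (x : R * R) :
  0 < mu -> 0 < lam + 2 * mu -> 0 < rho -> 0 < delta -> 0 < eps ->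
  x <> (0, 0) ->
  let tau := sqrt (delta / eps) in
  exists K w0 : R, 0 < w0 /\
    forall w : R, 0 < w < w0 ->
    forall i j : bool,
      Cmod (Gamma_omega (lam / delta) (mu / delta) (rho / eps) w x i j
            - expansion lam mu rho delta tau w x i j)%C
      <= K * Rabs (delta * tau ^ 4 * w ^ 4 * ln w + delta * tau ^ 4 * w ^ 4).
Proof.
  intros Hmu Ha Hrho Hdelta Heps Hx tau.
  destruct (Gamma_omega_sub_expansion_le lam mu rho delta eps x Hmu Ha Hrho Hdelta Heps
              (sqnorm_pos x Hx)) as [C [b [HC [Hb Hbound]]]].
  assert (Hdtau : 0 < delta * tau ^ 4)
    by (apply Rmult_lt_0_compat, pow_lt, sqrt_lt_R0, Rdiv_lt_0_compat; lra).
  exists (3 * C / (delta * tau ^ 4)), b. split; [lra|]. intros w Hw i j.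
  eapply Rle_trans; [apply Hbound; lra|].
  apply w4_one_add_abs_ln_le; lra.
Qed.
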